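(* Let $G$ be a proper interval graph and $<$ a proper vertex ordering of it. Let $M=\{e_1,e_2,\ldots,e_t\}$ be a matching in $G$ where $l(e_1)<l(e_2)<\cdots<l(e_t)$. Then $M$ is uniquely restricted in $G$ if and only if $\{e_i,e_{i+1}\}$ is a uniquely restricted matching in $G$ for each $i\in\{1,2,\ldots,t-1\}$.
   Context: Graphs are finite, simple, undirected. A proper interval graph is a graph with an interval representation (closed real intervals, adjacency iff intersection for distinct vertices) in which no interval strictly contains another. An ordering $<$ of $V(G)$ is a proper vertex ordering if for all $u<v<w$, $uw\in E(G)$ implies $uv,vw\in E(G)$. For an edge $e=uv$, $l(e)=\min_<\{u,v\}$ and $r(e)=\max_<\{u,v\}$. A matching is a set of pairwise vertex-disjoint edges; it is uniquely restricted if no other matching of $G$ matches exactly the same vertex set. *)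

From Stdlib Require Import Reals.
From mathcomp Require Import all_boot.
Set Implicit Arguments. Unset Strict Implicit. Unset Printing Implicit Defensive.

Definition simple_graph (T : finType) (E : rel T) : Prop :=
  (forall u v, E u v = E v u) /\ (forall u, ~~ E u u).

Definition proper_interval_rep (T : finType) (E : rel T) (a b : T -> R) : Prop :=
  (forall v, Rle (a v) (b v)) /\
  (forall u v, u != v ->
     (E u v <-> Rle (Rmax (a u) (a v)) (Rmin (b u) (b v)))) /\
  (forall u v, ~ (Rle (a u) (a v) /\ Rle (b v) (b u) /\
                  (a u <> a v \/ b u <> b v))).

Definition proper_interval_graph (T : finType) (E : rel T) : Prop :=
  simple_graph E /\ exists a b : T -> R, proper_interval_rep E a b.

(* A linear ordering of V(G) is encoded by an injective map ord : T -> nat,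
   u < v iff ord u < ord v. *)
Definition proper_vertex_ordering (T : finType) (E : rel T) (ord : T -> nat) : Prop :=
  injective ord /\
  (forall u v w, (ord u < ord v)%N -> (ord v < ord w)%N -> E u w -> E u v /\ E v w).

Definition is_edge (T : finType) (E : rel T) (X : {set T}) : bool :=
  [exists u, exists v, (X == [set u; v]) && E u v].

Definition matching (T : finType) (E : rel T) (M : {set {set T}}) : bool :=
  [forall X in M, is_edge E X] &&
  [forall X in M, forall Y in M, (X != Y) ==> [disjoint X & Y]].

Definition uniquely_restricted (T : finType) (E : rel T) (M : {set {set T}}) : Prop :=
  matching E M /\
  forall M' : {set {set T}}, matching E M' -> cover M' = cover M -> M' = M.

(* l(e) < l(f) w.r.t. ord, i.e. the smaller endpoint of e precedes
   the smaller endpoint of f. *)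
Definition l_lt (T : finType) (ord : T -> nat) (e f : {set T}) : bool :=
  [exists u in e, forall v in f, (ord u < ord v)%N].

From Stdlib Require Import Reals.
From mathcomp Require Import all_boot.
Set Implicit Arguments. Unset Strict Implicit. Unset Printing Implicit Defensive.

(* Call disjoint edges [ab] and [cd] (with [a < b] and
   [c < d]) swappable when [ac] and [bd] are edges too; then [{ab, cd}] is not
   uniquely restricted, since [{ac, bd}] covers the same vertices.
   Conversely, let another matching [M'] cover [V(M)].  A vertex of [V(M)]
   strictly inside an edge of [M] always yields a swappable pair.  Take the
   edge [ab] of [M \ M'] with leftmost left end, and [cd] the one with
   leftmost left end among the rest of [M \ M']; we may assume [b < c].  The
   [M']-partners of [a] and [b] are distinct and not left of [c]; if neither
   lies inside [cd], one lies beyond [d], and the umbrella property makes [ab]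
   and [cd] swappable.  Finally, if [e_i] and [e_j] are swappable with
   [i < j], then so are [e_i, e_(i+1)] or [e_(i+1), e_j]; hence some
   consecutive pair is swappable. *)

Section Matchings.

Variables (T : finType) (E : rel T).
Implicit Types (M N : {set {set T}}) (X Y : {set T}).

Lemma mem_cover M X v : X \in M -> v \in X -> v \in cover M.
Proof. by move=> XM vX; apply/bigcupP; exists X. Qed.

Lemma is_edge_nonempty X : is_edge E X -> exists v, v \in X.
Proof. by case/existsP=> u /existsP[v /andP[/eqP-> _]]; exists u; rewrite set21. Qed.

Lemma matching_edge M X : matching E M -> X \in M -> is_edge E X.
Proof. by case/andP=> /forall_inP + _; apply. Qed.

Lemma matching_disjoint M X Y :
  matching E M -> X \in M -> Y \in M -> X != Y -> [disjoint X & Y].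
Proof. by case/andP=> _ /forall_inP dM XM YM; move: (dM X XM) => /forall_inP/(_ Y YM)/implyP. Qed.

Lemma disjoint_neq X Y x y : [disjoint X & Y] -> x \in X -> y \in Y -> x != y.
Proof. by move=> dXY xX; apply: contraTneq => <-; rewrite (disjointFr dXY xX). Qed.

Lemma matching_eq M X Y v :
  matching E M -> X \in M -> Y \in M -> v \in X -> v \in Y -> X = Y.
Proof.
move=> HM XM YM vX vY; apply/eqP; apply: contraT => /(matching_disjoint HM XM YM).
by move/disjointFr/(_ vX); rewrite vY.
Qed.

Lemma matching_intro M :
  (forall X, X \in M -> is_edge E X) ->
  (forall X Y v, X \in M -> Y \in M -> v \in X -> v \in Y -> X = Y) ->
  matching E M.
Proof.
move=> edgeM eqM; apply/andP; split; first by apply/forall_inP.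
apply/forall_inP=> X XM; apply/forall_inP=> Y YM; apply/implyP=> neXY.
rewrite disjoint_subset; apply/subsetP=> v vX; apply/negP=> vY.
by move: neXY; rewrite (eqM _ _ _ XM YM vX vY) eqxx.
Qed.

Lemma matchingS M N : matching E M -> N \subset M -> matching E N.
Proof.
move=> HM /subsetP sNM; apply: matching_intro => [X /sNM|X Y v /sNM XM /sNM YM].
  exact: matching_edge HM.
exact: matching_eq HM XM YM.
Qed.

Lemma matchingU M N :
  matching E M -> matching E N -> [disjoint cover M & cover N] -> matching E (M :|: N).
Proof.
move=> HM HN dMN; apply: matching_intro=> [X /setUP[]|X Y v /setUP[] XM /setUP[] YM vX vY].
- exact: matching_edge.
- exact: matching_edge.
- exact: matching_eq HM XM YM vX vY.
- by move: (disjointFr dMN (mem_cover XM vX)); rewrite (mem_cover YM vY).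
- by move: (disjointFr dMN (mem_cover YM vY)); rewrite (mem_cover XM vX).
- exact: matching_eq HN XM YM vX vY.
Qed.

Lemma cover_disjoint_setD M N :
  matching E M -> N \subset M -> [disjoint cover N & cover (M :\: N)].
Proof.
move=> HM /subsetP sNM; rewrite disjoint_subset; apply/subsetP=> v /bigcupP[X XN vX].
apply/negP=> /bigcupP[Y /setDP[YM YN] vY].
by move: YN; rewrite -(matching_eq HM (sNM _ XN) YM vX vY) XN.
Qed.

Lemma cover_setU M N : cover (M :|: N) = cover M :|: cover N.
Proof. exact: bigcup_setU. Qed.

Lemma coverS M N : N \subset M -> cover N \subset cover M.
Proof. by move=> /subsetP sNM; apply/subsetP=> v /bigcupP[X /sNM XM vX]; exact: mem_cover XM vX. Qed.

Lemma notin_cover_setD1 M N X v :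
  matching E M -> N \subset M -> X \in M -> v \in cover (N :\ X) -> v \notin X.
Proof.
move=> HM /subsetP sNM XM /bigcupP[Y /setD1P[neYX /sNM YM] vY].
by apply: contraNN neYX => vX; rewrite (matching_eq HM YM XM vY vX).
Qed.

Lemma matching_set2 X Y :
  is_edge E X -> is_edge E Y -> [disjoint X & Y] -> matching E [set X; Y].
Proof.
move=> eX eY dXY; apply: matching_intro => [Z /set2P[]->//|Z Z' v].
move=> /set2P[]-> /set2P[]-> // vZ vZ'.
all: by move: dXY; rewrite -setI_eq0 => /eqP/setP/(_ v); rewrite !inE vZ vZ'.
Qed.

Lemma cover_setD_sub M M' :
  matching E M -> matching E M' -> cover M' = cover M ->
  cover (M :\: M') \subset cover (M' :\: M).
Proof.
move=> HM HM' covM'; apply/subsetP=> v /bigcupP[X /setDP[XM XM'] vX].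
have /bigcupP[Y YM' vY] : v \in cover M' by rewrite covM'; exact: mem_cover XM vX.
apply: (mem_cover (X := Y)) => //; apply/setDP; split=> //; apply: contra XM' => YM.
by rewrite (matching_eq HM XM YM vX vY).
Qed.

Lemma uniquely_restrictedS M N :
  uniquely_restricted E M -> N \subset M -> uniquely_restricted E N.
Proof.
move=> [HM urM] sNM; have HN := matchingS HM sNM.
split=> // N' HN' covN'.
have dN'M : [disjoint cover N' & cover (M :\: N)] by rewrite covN' cover_disjoint_setD.
have M2E : N' :|: (M :\: N) = M.
  apply: urM; first by apply: matchingU => //; apply: matchingS HM (subsetDl _ _).
  by rewrite cover_setU covN' -cover_setU -{2}(setID M N) (setIidPr sNM).
have notD X : X \in N' -> X \notin M :\: N.
  move=> XN'; apply/negP=> XD; have [v vX] := is_edge_nonempty (matching_edge HN' XN').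
  by move: (disjointFr dN'M (mem_cover XN' vX)); rewrite (mem_cover XD vX).
apply/setP=> X; apply/idP/idP=> [XN'|XN].
  have XM : X \in M by rewrite -M2E in_setU XN'.
  by move: (notD _ XN'); rewrite in_setD XM andbT negbK.
have: X \in N' :|: (M :\: N) by rewrite M2E (subsetP sNM).
by rewrite in_setU in_setD XN orbF.
Qed.

Lemma cover_setD_neq0 M M' :
  matching E M -> matching E M' -> cover M' = cover M -> M' != M ->
  exists v, v \in cover (M :\: M').
Proof.
move=> HM HM' covM' neqM.
have [/eqP|[X XD]] := set_0Vmem (M :\: M'); last first.
  have [v vX] := is_edge_nonempty (matching_edge HM (subsetP (subsetDl M M') X XD)).
  by exists v; exact: mem_cover XD vX.
rewrite setD_eq0 => sMM'.
have [/eqP|[X XD]] := set_0Vmem (M' :\: M).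
  by rewrite setD_eq0 => sM'M; move: neqM; rewrite eqEsubset sM'M sMM'.
have [v vX] := is_edge_nonempty (matching_edge HM' (subsetP (subsetDl M' M) X XD)).
by exists v; apply: subsetP (cover_setD_sub HM' HM (esym covM')) _ (mem_cover XD vX).
Qed.

End Matchings.

Lemma l_lt_trans (T : finType) (ord : T -> nat) : transitive (l_lt ord).
Proof.
move=> Y X Z /existsP[u /andP[uX /forall_inP ltuY]] /existsP[w /andP[wY /forall_inP ltwZ]].
apply/existsP; exists u; rewrite uX /=; apply/forall_inP=> v vZ.
exact: ltn_trans (ltuY _ wY) (ltwZ _ vZ).
Qed.

Lemma l_lt_irr (T : finType) (ord : T -> nat) : irreflexive (l_lt ord).
Proof. by move=> X; apply/existsP=> -[u /andP[uX /forall_inP/(_ u uX)]]; rewrite ltnn. Qed.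

Lemma l_lt_set2 (T : finType) (ord : T -> nat) a b c (Y : {set T}) :
  l_lt ord [set a; b] Y -> (ord a < ord b)%N -> c \in Y -> (ord a < ord c)%N.
Proof.
case/existsP=> u /andP[/set2P[]-> /forall_inP ltuY] ltab cY; first exact: ltuY.
exact: ltn_trans ltab (ltuY _ cY).
Qed.

Section ProperOrdering.

Variables (T : finType) (E : rel T) (ord : T -> nat).
Hypotheses (E_simple : simple_graph E) (ord_proper : proper_vertex_ordering E ord).
Implicit Types (M : {set {set T}}) (X Y e f g : {set T}).

Let ord_inj : injective ord := proj1 ord_proper.

Lemma ord_neq_disjoint X Y x y :
  [disjoint X & Y] -> x \in X -> y \in Y -> ord x <> ord y.
Proof. by move=> dXY xX yY /ord_inj eqxy; move: (disjoint_neq dXY xX yY); rewrite eqxy eqxx. Qed.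

Lemma edge_ordered X :
  is_edge E X -> exists a b, [/\ X = [set a; b], (ord a < ord b)%N & E a b].
Proof.
case: E_simple => Esym Eirr /existsP[u /existsP[v /andP[/eqP-> Euv]]].
case: (ltngtP (ord u) (ord v)) => [ltuv|ltvu|/ord_inj equv].
- by exists u, v.
- by exists v, u; rewrite setUC Esym.
- by move: Euv; rewrite equv (negbTE (Eirr v)).
Qed.

Lemma edge_partner X w : is_edge E X -> w \in X -> exists x, X = [set w; x] /\ E w x.
Proof.
case: E_simple => Esym _ /existsP[u /existsP[v /andP[/eqP-> Euv]]] /set2P[]->.
- by exists v.
- by exists u; rewrite setUC Esym.
Qed.

Lemma umbrella u v w x :
  (ord u <= ord v)%N -> (ord v < ord w)%N -> (ord w <= ord x)%N -> E u x -> E v w.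
Proof.
case: ord_proper => _ proper leuv ltvw lewx Eux.
rewrite leq_eqVlt in leuv.
have Evx : E v x.
  case/orP: leuv => [/eqP/ord_inj<- //|ltuv].
  by case: (proper u v x ltuv (leq_trans ltvw lewx) Eux).
rewrite leq_eqVlt in lewx; case/orP: lewx => [/eqP/ord_inj-> //|ltwx].
by case: (proper v w x ltvw ltwx Evx).
Qed.

Definition swappable e f := exists a b c d,
  [/\ e = [set a; b], f = [set c; d], (ord a < ord b)%N, (ord c < ord d)%N &
      [/\ E a b, E c d, E a c & E b d]].

Definition has_swappable_pair M :=
  exists e f, [/\ e \in M, f \in M, e != f & swappable e f].

Lemma swappable_sym e f : swappable e f -> swappable f e.
Proof.
case: E_simple => Esym _ [a [b [c [d [-> -> ltab ltcd [Eab Ecd Eac Ebd]]]]]].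
by exists c, d, a, b; split=> //; split=> //; rewrite Esym.
Qed.

Lemma swappable_interleaved a b c d :
  (ord a < ord b)%N -> (ord c < ord d)%N -> E a b -> E c d ->
  (ord a < ord c)%N -> (ord c < ord b)%N -> b != d ->
  swappable [set a; b] [set c; d].
Proof.
move=> ltab ltcd Eab Ecd ltac ltcb neqbd; exists a, b, c, d; split=> //; split=> //.
  exact: umbrella (leqnn _) ltac (ltnW ltcb) Eab.
case: (ltngtP (ord b) (ord d)) => [ltbd|ltdb|/ord_inj eqbd].
- exact: umbrella (ltnW ltcb) ltbd (leqnn _) Ecd.
- rewrite (proj1 E_simple).
  exact: umbrella (ltnW (ltn_trans ltac ltcd)) ltdb (leqnn _) Eab.
- by rewrite eqbd eqxx in neqbd.
Qed.

Lemma swappable_of_inner M c d v :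
  matching E M -> [set c; d] \in M -> (ord c < ord d)%N -> E c d ->
  v \in cover M -> v \notin [set c; d] -> (ord c < ord v)%N -> (ord v < ord d)%N ->
  has_swappable_pair M.
Proof.
move=> HM eM ltcd Ecd /bigcupP[h hM vh] ve ltcv ltvd.
have neh : [set c; d] != h by apply: contraNneq ve => ->.
have deh := matching_disjoint HM eM hM neh.
have [c' [d' [hcd ltcd' Ecd']]] := edge_ordered (matching_edge HM hM).
rewrite hcd in hM neh deh vh *.
case: (ltngtP (ord c) (ord c')) => [ltcc'|ltc'c|/(ord_neq_disjoint deh (set21 c d) (set21 c' d'))//].
- have lec'v : (ord c' <= ord v)%N by move: vh => /set2P[]-> //; apply: ltnW.
  exists [set c; d], [set c'; d']; split=> //.
  apply: swappable_interleaved => //; first exact: leq_ltn_trans lec'v ltvd.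
  exact: disjoint_neq deh (set22 c d) (set22 c' d').
- have vd' : v = d' by move: vh => /set2P[vc'|//]; rewrite vc' ltnNge (ltnW ltc'c) in ltcv.
  exists [set c'; d'], [set c; d]; split=> //; first by rewrite eq_sym.
  apply: swappable_interleaved => //; first by rewrite -vd'.
  by rewrite -vd'; apply: contraTneq ltvd => ->; rewrite ltnn.
Qed.

Lemma swappable_split e f g :
  is_edge E f -> [disjoint e & f] -> [disjoint f & g] ->
  l_lt ord e f -> l_lt ord f g -> swappable e g -> swappable e f \/ swappable f g.
Proof.
move=> fE def dfg ltef ltfg [a [b [c [d [ee eg ltab ltcd [Eab Ecd Eac Ebd]]]]]].
have [a' [b' [ef ltab' Eab']]] := edge_ordered fE.
subst e f g.
have ltaa' := l_lt_set2 ltef ltab (set21 a' b').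
have lta'c := l_lt_set2 ltfg ltab' (set21 c d).
case: (ltngtP (ord a') (ord b)) => [lta'b|ltba'|/esym/(ord_neq_disjoint def (set22 a b) (set21 a' b'))//].
  by left; apply: swappable_interleaved => //; exact: disjoint_neq def (set22 a b) (set22 a' b').
case: (ltngtP (ord c) (ord b')) => [ltcb'|ltb'c|/esym/(ord_neq_disjoint dfg (set22 a' b') (set21 c d))//].
  by right; apply: swappable_interleaved => //; exact: disjoint_neq dfg (set22 a' b') (set22 c d).
left; exists a, b, a', b'; split=> //; split=> //.
  exact: umbrella (leqnn _) ltaa' (ltnW lta'c) Eac.
exact: umbrella (leqnn _) (ltn_trans ltba' ltab') (ltnW (ltn_trans ltb'c ltcd)) Ebd.
Qed.

Lemma swappable_not_uniquely_restricted e f :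
  [disjoint e & f] -> swappable e f -> ~ uniquely_restricted E [set e; f].
Proof.
move=> def [a [b [c [d [ee ef ltab ltcd [Eab Ecd Eac Ebd]]]]]] [_ urM]; subst e f.
have neqab : a != b by apply: contraTneq ltab => ->; rewrite ltnn.
have neqcd : c != d by apply: contraTneq ltcd => ->; rewrite ltnn.
have edge2 u v : E u v -> is_edge E [set u; v].
  by move=> Euv; apply/existsP; exists u; apply/existsP; exists v; rewrite eqxx.
have dacbd : [disjoint [set a; c] & [set b; d]].
  have neqad := disjoint_neq def (set21 a b) (set22 c d).
  have neqbc := disjoint_neq def (set22 a b) (set21 c d).
  rewrite -setI_eq0; apply/eqP/setP=> v; rewrite !inE; apply/negbTE/negP.
  case/andP=> /orP[]/eqP-> /orP[]/eqP eqv;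
    by move: neqab neqcd neqad neqbc; rewrite eqv !eqxx.
have cov2 X Y : cover [set X; Y] = X :|: Y by rewrite cover_setU !cover1.
have eqM : [set [set a; c]; [set b; d]] = [set [set a; b]; [set c; d]].
  apply: urM (matching_set2 (edge2 _ _ Eac) (edge2 _ _ Ebd) dacbd) _.
  by rewrite !cov2; apply/setP=> v; rewrite !inE; do 4 case: (_ == _).
have : [set a; c] \in [set [set a; b]; [set c; d]] by rewrite -eqM set21.
case/set2P=> eqac.
  by move: (disjointFl def (set21 c d)); rewrite -eqac set22.
by move: (disjointFr def (set21 a b)); rewrite -eqac set21.
Qed.

Lemma leftmost_edge (D : {set {set T}}) v0 :
  (forall X, X \in D -> is_edge E X) -> v0 \in cover D ->
  exists a b, [/\ [set a; b] \in D, (ord a < ord b)%N, E a b &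
                  forall v, v \in cover D -> (ord a <= ord v)%N].
Proof.
move=> edgeD v0D; case: (arg_minnP ord v0D) => x /bigcupP[X XD xX] minx.
have [a [b [eqX ltab Eab]]] := edge_ordered (edgeD X XD).
exists a, b; split=> [||//|v /minx]; rewrite -?eqX //.
by apply: leq_trans; move: xX; rewrite eqX => /set2P[]-> //; apply: ltnW.
Qed.

Lemma partner_in_cover_setD M M' e w :
  matching E M -> matching E M' -> cover M' = cover M ->
  e \in M :\: M' -> w \in e ->
  exists x, [/\ [set w; x] \in M', E w x, x \notin e & x \in cover ((M :\: M') :\ e)].
Proof.
move=> HM HM' covM' /setDP[eM eM'] we.
have /bigcupP[X XM' wX] : w \in cover M' by rewrite covM'; exact: mem_cover eM we.
have [x [eqX Ewx]] := edge_partner (matching_edge HM' XM') wX.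
have XM : X \notin M by apply: contra eM' => XM; rewrite (matching_eq HM eM XM we wX).
have xe : x \notin e.
  have [y [eqe _]] := edge_partner (matching_edge HM eM) we.
  rewrite eqe; apply/set2P=> -[xw|xy].
    by move: Ewx; rewrite xw (negbTE (proj2 E_simple w)).
  by move: eM'; rewrite eqe -xy -eqX XM'.
exists x; split=> //; first by rewrite -eqX.
have : x \in cover (M' :\: M) by apply: (mem_cover (X := X)); rewrite ?inE ?XM // eqX set22.
move/(subsetP (cover_setD_sub HM' HM (esym covM')))=> /bigcupP[g gD xg].
by apply: (mem_cover (X := g)) => //; rewrite in_setD1 gD andbT; apply: contraNneq xe => <-.
Qed.

Lemma swappable_of_partners M a b c d p q :
  matching E M -> [set a; b] \in M -> [set c; d] \in M ->
  (ord a < ord b)%N -> (ord b < ord c)%N -> (ord c < ord d)%N -> E a b -> E c d ->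
  E a p -> E b q -> p != q -> p \in cover M -> q \in cover M ->
  (ord c <= ord p)%N -> (ord c <= ord q)%N -> has_swappable_pair M.
Proof.
move=> HM e1M e2M ltab ltbc ltcd Eab Ecd Eap Ebq neqpq pM qM lecp lecq.
have ltbd := ltn_trans ltbc ltcd.
suff [Ebd|//] : E b d \/ has_swappable_pair M.
  have neqe : [set a; b] != [set c; d].
    apply/eqP=> eqe; move: (set21 c d) ltbc; rewrite -eqe => /set2P[]->.
      by rewrite ltnNge (ltnW ltab).
    by rewrite ltnn.
  exists [set a; b], [set c; d]; split=> //; exists a, b, c, d; split=> //; split=> //.
  exact: umbrella (leqnn _) (ltn_trans ltab ltbc) lecp Eap.
case: (leqP (ord d) (ord q)) => [ledq|ltqd].
  by left; exact: umbrella (leqnn _) ltbd ledq Ebq.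
case: (leqP (ord d) (ord p)) => [ledp|ltpd].
  by left; exact: umbrella (ltnW ltab) ltbd ledp Eap.
right; have [x [xM neqxc lecx ltxd]] :
    exists x, [/\ x \in cover M, x != c, (ord c <= ord x)%N & (ord x < ord d)%N].
  case: (eqVneq p c) => [eqpc|neqpc]; last by exists p.
  by exists q; split=> //; rewrite -eqpc eq_sym.
have ltcx : (ord c < ord x)%N by rewrite ltn_neqAle lecx andbT (inj_eq ord_inj) eq_sym.
apply: (swappable_of_inner HM e2M ltcd Ecd xM _ ltcx ltxd).
by apply/set2P=> -[|eqxd]; [apply/eqP|rewrite eqxd ltnn in ltxd].
Qed.

Lemma has_swappable_pair_of_cover M M' v0 :
  matching E M -> matching E M' -> cover M' = cover M ->
  v0 \in cover (M :\: M') -> has_swappable_pair M.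
Proof.
move=> HM HM' covM' v0D; set D := M :\: M'.
have sDM : D \subset M := subsetDl M M'.
have edgeD X : X \in D -> is_edge E X by move/(subsetP sDM); exact: matching_edge.
have [a [b [e1D ltab Eab mina]]] := leftmost_edge edgeD v0D.
have e1M := subsetP sDM _ e1D.
have [p [ap_M' Eap pe1 pD1]] := partner_in_cover_setD HM HM' covM' e1D (set21 a b).
have [q [bq_M' Ebq qe1 qD1]] := partner_in_cover_setD HM HM' covM' e1D (set22 a b).
have neqpq : p != q.
  apply: contraNneq pe1 => eqpq.
  rewrite -eqpq in bq_M'; have eqap := matching_eq HM' ap_M' bq_M' (set22 a p) (set22 b p).
  by move: (set21 b p); rewrite -eqap => /set2P[eqba|->]; [rewrite eqba ltnn in ltab|rewrite set22].
have sD1M : D :\ [set a; b] \subset M := subset_trans (subsetDl _ _) sDM.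
have [c [d [e2D1 ltcd Ecd minc]]] :=
  leftmost_edge (fun X XD1 => matching_edge HM (subsetP sD1M X XD1)) pD1.
have cD1 := mem_cover e2D1 (set21 c d).
have ce1 := notin_cover_setD1 HM sDM e1M cD1.
have cM := subsetP (coverS sD1M) _ cD1.
have ltac : (ord a < ord c)%N.
  rewrite ltn_neqAle (mina c (subsetP (coverS (subsetDl _ _)) _ cD1)) andbT.
  by apply: contraNneq ce1 => /ord_inj->; rewrite set21.
case: (ltngtP (ord c) (ord b)) => [ltcb|ltbc|/ord_inj eqcb]; last by rewrite eqcb set22 in ce1.
  exact: swappable_of_inner HM e1M ltab Eab cM ce1 ltac ltcb.
apply: (swappable_of_partners HM e1M _ ltab ltbc ltcd Eab Ecd Eap Ebq neqpq) (minc p pD1) (minc q qD1).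
- exact: subsetP sD1M _ e2D1.
- exact: subsetP (coverS sD1M) _ pD1.
- exact: subsetP (coverS sD1M) _ qD1.
Qed.

Section SortedMatching.

Variable s : seq {set T}.
Hypotheses (s_matching : matching E [set X in s]) (s_sorted : sorted (l_lt ord) s).

Local Notation e_ i := (nth set0 s i).

Lemma mem_set_nth i : (i < size s)%N -> e_ i \in [set X in s].
Proof. by move=> lti; rewrite inE mem_nth. Qed.

Lemma nth_matching_disjoint i j :
  (i < j)%N -> (j < size s)%N -> [disjoint e_ i & e_ j].
Proof.
move=> ltij ltj; have lti := ltn_trans ltij ltj.
apply: matching_disjoint s_matching _ _ _; rewrite ?mem_set_nth //.
by rewrite nth_uniq ?(ltn_eqF ltij) ?(sorted_uniq (@l_lt_trans T ord) (@l_lt_irr T ord)).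
Qed.

Lemma nth_l_lt i j : (i < j)%N -> (j < size s)%N -> l_lt ord (e_ i) (e_ j).
Proof.
move=> ltij ltj; apply: (sorted_ltn_nth (@l_lt_trans T ord)) => //.
by rewrite inE (ltn_trans ltij).
Qed.

Lemma swappable_consecutive i j :
  (i < j)%N -> (j < size s)%N -> swappable (e_ i) (e_ j) ->
  exists2 k, (k.+1 < size s)%N & swappable (e_ k) (e_ k.+1).
Proof.
move=> ltij; have [n ->] : exists n, j = i.+1 + n by exists (j - i.+1); rewrite subnKC.
elim: n i {ltij} => [|n IHn] i lt sw.
  by exists i; rewrite addn0 in lt sw.
have lti1 : (i.+1 < size s)%N := leq_ltn_trans (leq_addr _ _) lt.
have lti1j : (i.+1 < i.+1 + n.+1)%N by rewrite -{1}(addn0 i.+1) ltn_add2l.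
have [sw1|sw2] := swappable_split (matching_edge s_matching (mem_set_nth lti1))
  (nth_matching_disjoint (ltnSn i) lti1) (nth_matching_disjoint lti1j lt)
  (nth_l_lt (ltnSn i) lti1) (nth_l_lt lti1j lt) sw.
  by exists i.
by apply: (IHn i.+1); rewrite addSnnS.
Qed.

Lemma consecutive_of_has_swappable_pair :
  has_swappable_pair [set X in s] ->
  exists2 k, (k.+1 < size s)%N & swappable (e_ k) (e_ k.+1).
Proof.
case=> e [f [es fs neqef sw]]; rewrite !inE in es fs.
have /esym eqe := nth_index set0 es; have /esym eqf := nth_index set0 fs.
rewrite -index_mem in es; rewrite -index_mem in fs.
case: (ltngtP (index e s) (index f s)) => [ltef|ltfe|eqi].
- by apply: (swappable_consecutive ltef fs); rewrite -eqe -eqf.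
- by apply: (swappable_consecutive ltfe es); rewrite -eqe -eqf; apply: swappable_sym.
- by rewrite eqe eqf eqi eqxx in neqef.
Qed.

End SortedMatching.

End ProperOrdering.

Theorem theorem3 (T : finType) (E : rel T) (ord : T -> nat)
  (s : seq {set T}) :
  proper_interval_graph E ->
  proper_vertex_ordering E ord ->
  matching E [set X in s] ->
  sorted (l_lt ord) s ->
  (uniquely_restricted E [set X in s] <->
   forall i : nat, (i.+1 < size s)%N ->
     uniquely_restricted E [set nth set0 s i; nth set0 s i.+1]).
Proof.
move=> [E_simple _] ord_proper s_matching s_sorted; split.
  move=> urs i lti; apply: uniquely_restrictedS urs _.
  by apply/subsetP=> X /set2P[]->; rewrite inE mem_nth // ltnW.
move=> ur_pairs; split=> // M' HM' covM'.
apply/eqP; apply: contraT => neqM.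
have [v0 v0D] := cover_setD_neq0 s_matching HM' covM' neqM.
have [k ltk swk] := consecutive_of_has_swappable_pair E_simple ord_proper s_matching s_sorted
  (has_swappable_pair_of_cover E_simple ord_proper s_matching HM' covM' v0D).
have dk := nth_matching_disjoint s_matching s_sorted (ltnSn k) ltk.
by case: (swappable_not_uniquely_restricted dk swk (ur_pairs k ltk)).
Qed.
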